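(* For all $M\in\Lambda_R$: if $M\to^* M_1$ and $M\to^* M_2$, then there is $M_3\in\Lambda_R$ such that $M_1\to^* M_3$ and $M_2\to^* M_3$.
   Context: $\Lambda_R\ni M,N ::= x\mid\lambda x.M\mid MN\mid M.l\mid R\mid M\oplus R$, with records $R ::= \langle l_i=M_i\mid i\in I\rangle$ ($I$ finite, labels pairwise distinct), $x$ ranging over variables and $l$ over labels; terms are identified up to renaming of bound variables. Reduction $\to$ is the least compatible relation (closed under all term constructors) containing $(\lambda x.M)N\to M[N/x]$ (capture-avoiding substitution); $\langle l_i=M_i\mid i\in I\rangle.l_j\to M_j$ if $j\in I$; $\langle l_i=M_i\mid i\in I\rangle\oplus\langle l_j=N_j\mid j\in J\rangle\to\langle l_i=M_i,\ l_j=N_j\mid i\in I\setminus J,\ j\in J\rangle$. $\to^*$ is the reflexive transitive closure of $\to$. *)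

From Stdlib Require Import List Arith Sorted.
Import ListNotations.

Definition label := nat.

(* Terms up to alpha-equivalence: de Bruijn indices.
   Rec fs      : record < l_i = M_i | i in I >
   Ext M fs    : M (+) R   (the right operand is syntactically a record)   *)
Inductive term : Type :=
| Var  : nat -> term
| Lam  : term -> term
| App  : term -> term -> term
| Proj : term -> label -> term
| Rec  : list (label * term) -> term
| Ext  : term -> list (label * term) -> term.

Fixpoint shift (c : nat) (t : term) : term :=
  match t with
  | Var n => if c <=? n then Var (S n) else Var n
  | Lam M => Lam (shift (S c) M)
  | App M N => App (shift c M) (shift c N)
  | Proj M l => Proj (shift c M) l
  | Rec fs => Rec (map (fun '(l, M) => (l, shift c M)) fs)
  | Ext M fs => Ext (shift c M) (map (fun '(l, N) => (l, shift c N)) fs)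
  end.

(* capture-avoiding substitution of N for index k (indices above k drop by one) *)
Fixpoint subst (k : nat) (N : term) (t : term) : term :=
  match t with
  | Var m => if m <? k then Var m else if m =? k then N else Var (pred m)
  | Lam M => Lam (subst (S k) (shift 0 N) M)
  | App M1 M2 => App (subst k N M1) (subst k N M2)
  | Proj M l => Proj (subst k N M) l
  | Rec fs => Rec (map (fun '(l, M) => (l, subst k N M)) fs)
  | Ext M fs => Ext (subst k N M) (map (fun '(l, P) => (l, subst k N P)) fs)
  end.

(* Records are represented canonically: fields listed with strictly
   increasing labels (so labels are pairwise distinct and a record is
   determined by its finite label->term map, independent of order). *)
Definition rec_ok (fs : list (label * term)) : Prop :=
  StronglySorted lt (map fst fs).

Inductive wf : term -> Prop :=
| wf_Var n : wf (Var n)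
| wf_Lam M : wf M -> wf (Lam M)
| wf_App M N : wf M -> wf N -> wf (App M N)
| wf_Proj M l : wf M -> wf (Proj M l)
| wf_Rec fs : rec_ok fs -> Forall (fun p => wf (snd p)) fs -> wf (Rec fs)
| wf_Ext M fs : wf M -> rec_ok fs -> Forall (fun p => wf (snd p)) fs ->
    wf (Ext M fs).

Fixpoint lookup (l : label) (fs : list (label * term)) : option term :=
  match fs with
  | [] => None
  | (k, M) :: fs' => if k =? l then Some M else lookup l fs'
  end.

(* Merge of two sorted records: fields of fs1 whose label is not in fs2,
   together with all fields of fs2 (fs2 wins on common labels); the result
   is again sorted. *)
Fixpoint rmerge (fs1 fs2 : list (label * term)) : list (label * term) :=
  match fs1 with
  | [] => fs2
  | (l, M) :: fs1' =>
      (fix aux (fs2 : list (label * term)) : list (label * term) :=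
         match fs2 with
         | [] => fs1
         | (k, N) :: fs2' =>
             if l <? k then (l, M) :: rmerge fs1' fs2
             else if k <? l then (k, N) :: aux fs2'
             else (k, N) :: rmerge fs1' fs2'
         end) fs2
  end.

Inductive step : term -> term -> Prop :=
| st_beta M N : step (App (Lam M) N) (subst 0 N M)
| st_proj fs l M : lookup l fs = Some M -> step (Proj (Rec fs) l) M
| st_ext fs1 fs2 : step (Ext (Rec fs1) fs2) (Rec (rmerge fs1 fs2))
| st_lam M M' : step M M' -> step (Lam M) (Lam M')
| st_appl M M' N : step M M' -> step (App M N) (App M' N)
| st_appr M N N' : step N N' -> step (App M N) (App M N')
| st_projc M M' l : step M M' -> step (Proj M l) (Proj M' l)
| st_rec fs fs' : fstep fs fs' -> step (Rec fs) (Rec fs')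
| st_extl M M' fs : step M M' -> step (Ext M fs) (Ext M' fs)
| st_extr M fs fs' : fstep fs fs' -> step (Ext M fs) (Ext M fs')
with fstep : list (label * term) -> list (label * term) -> Prop :=
| fs_here l M M' fs : step M M' -> fstep ((l, M) :: fs) ((l, M') :: fs)
| fs_there p fs fs' : fstep fs fs' -> fstep (p :: fs) (p :: fs').

Inductive red : term -> term -> Prop :=
| red_refl M : red M M
| red_step M N P : step M N -> red N P -> red M P.

From Stdlib Require Import List Arith Lia Relations.
Import ListNotations.

(* Takahashi's method.  Parallel reduction [par], which contracts any set of
   redexes at once, contains [step] and is contained in [red]; hence [red] is
   the reflexive-transitive closure of [par].  The complete development
   [dev M], contracting every redex of [M], satisfies the triangle property
   [par M M' -> par M' (dev M)], which makes [par] diamond and so [red]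
   confluent. *)

Section Triangle.

Variables (A : Type) (R : relation A) (f : A -> A).
Hypothesis triangle : forall x y, R x y -> R y (f x).

Lemma strip_of_triangle x y z : R x y -> clos_refl_trans_1n A R x z ->
  exists w, clos_refl_trans_1n A R y w /\ R z w.
Proof.
  intros Hxy Hxz; revert y Hxy; induction Hxz as [x | x x' z Hxx' _ IH]; intros y Hxy.
  - exists y; split; [constructor | exact Hxy].
  - destruct (IH (f x) (triangle _ _ Hxx')) as [w [Hfw Hzw]].
    exists w; split; [econstructor; [apply triangle, Hxy | exact Hfw] | exact Hzw].
Qed.

Lemma confluent_of_triangle x y z :
  clos_refl_trans_1n A R x y -> clos_refl_trans_1n A R x z ->
  exists w, clos_refl_trans_1n A R y w /\ clos_refl_trans_1n A R z w.
Proof.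
  intros Hxy; revert z; induction Hxy as [x | x x' y Hxx' _ IH]; intros z Hxz.
  - exists z; split; [exact Hxz | constructor].
  - destruct (strip_of_triangle _ _ _ Hxx' Hxz) as [u [Hx'u Hzu]].
    destruct (IH _ Hx'u) as [w [Hyw Huw]].
    exists w; split; [exact Hyw | econstructor; eauto].
Qed.

End Triangle.

Fixpoint term_ind_nested (P : term -> Prop)
  (HVar : forall n, P (Var n))
  (HLam : forall M, P M -> P (Lam M))
  (HApp : forall M N, P M -> P N -> P (App M N))
  (HProj : forall M l, P M -> P (Proj M l))
  (HRec : forall fs, Forall (fun p => P (snd p)) fs -> P (Rec fs))
  (HExt : forall M fs, P M -> Forall (fun p => P (snd p)) fs -> P (Ext M fs))
  (t : term) {struct t} : P t :=
  let IH := term_ind_nested P HVar HLam HApp HProj HRec HExt in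
  let fix IHfields (fs : list (label * term)) : Forall (fun p => P (snd p)) fs :=
    match fs with
    | [] => Forall_nil _
    | (l, M) :: fs' => @Forall_cons _ (fun p => P (snd p)) (l, M) fs' (IH M) (IHfields fs')
    end in
  match t with
  | Var n => HVar n
  | Lam M => HLam M (IH M)
  | App M N => HApp M N (IH M) (IH N)
  | Proj M l => HProj M l (IH M)
  | Rec fs => HRec fs (IHfields fs)
  | Ext M fs => HExt M fs (IH M) (IHfields fs)
  end.

(* A notation rather than a definition: it is then syntactically the [map]
   that [shift] and [subst] unfold to, so lemmas about it rewrite there. *)
Notation map_fields f fs := (@map (label * term) (label * term) (fun '(l, M) => (l, f M)) fs).

Lemma map_fields_labels (f : term -> term) (fs : list (label * term)) :
  map fst (map_fields f fs) = map fst fs.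
Proof. induction fs as [|[l M] fs IH]; cbn; f_equal; auto. Qed.

Lemma lookup_map_fields (f : term -> term) l (fs : list (label * term)) :
  lookup l (map_fields f fs) = option_map f (lookup l fs).
Proof. induction fs as [|[k M] fs IH]; cbn; auto. destruct (k =? l); auto. Qed.

Lemma lookup_In l fs M : lookup l fs = Some M -> In (l, M) fs.
Proof.
  induction fs as [|[k N] fs IH]; cbn; [discriminate|].
  destruct (Nat.eqb_spec k l); [intros [= <-]; subst|]; auto.
Qed.

Lemma Forall_map_fields (P Q : term -> Prop) (f : term -> term) (fs : list (label * term)) :
  Forall (fun p => P (snd p) -> Q (f (snd p))) fs ->
  Forall (fun p => P (snd p)) fs -> Forall (fun p => Q (snd p)) (map_fields f fs).
Proof. induction 1 as [|[l M]]; inversion 1; constructor; cbn in *; auto. Qed.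

Lemma rec_ok_map_fields (f : term -> term) (fs : list (label * term)) :
  rec_ok fs -> rec_ok (map_fields f fs).
Proof. unfold rec_ok; rewrite map_fields_labels; exact id. Qed.

Lemma rmerge_nil_r fs : rmerge fs [] = fs.
Proof. destruct fs as [|[l M] fs]; reflexivity. Qed.

Lemma rmerge_cons l M fs1 k N fs2 :
  rmerge ((l, M) :: fs1) ((k, N) :: fs2) =
  if l <? k then (l, M) :: rmerge fs1 ((k, N) :: fs2)
  else if k <? l then (k, N) :: rmerge ((l, M) :: fs1) fs2
  else (k, N) :: rmerge fs1 fs2.
Proof. reflexivity. Qed.

Lemma map_fields_rmerge (f : term -> term) (fs1 fs2 : list (label * term)) :
  map_fields f (rmerge fs1 fs2) = rmerge (map_fields f fs1) (map_fields f fs2).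
Proof.
  revert fs2; induction fs1 as [|[l M] fs1 IH1]; intros fs2; [reflexivity|].
  induction fs2 as [|[k N] fs2 IH2]; [rewrite !rmerge_nil_r; reflexivity|].
  cbn [map]; rewrite !rmerge_cons.
  destruct (l <? k); [|destruct (k <? l)]; cbn [map]; f_equal; auto.
Qed.

Lemma in_rmerge p fs1 fs2 : In p (rmerge fs1 fs2) -> In p fs1 \/ In p fs2.
Proof.
  revert fs2; induction fs1 as [|[l M] fs1 IH1]; intros fs2; [cbn; auto|].
  induction fs2 as [|[k N] fs2 IH2]; [rewrite rmerge_nil_r; auto|].
  rewrite rmerge_cons.
  destruct (l <? k); [|destruct (k <? l)]; intros [<- | Hin]; cbn; auto.
  - destruct (IH1 _ Hin); cbn in *; tauto.
  - destruct (IH2 Hin); cbn in *; tauto.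
  - destruct (IH1 _ Hin); cbn in *; tauto.
Qed.

Lemma in_labels_rmerge x fs1 fs2 :
  In x (map fst (rmerge fs1 fs2)) -> In x (map fst fs1) \/ In x (map fst fs2).
Proof.
  rewrite in_map_iff; intros [p [<- Hp]].
  destruct (in_rmerge _ _ _ Hp); [left | right]; apply in_map; auto.
Qed.

Lemma rec_ok_rmerge fs1 fs2 : rec_ok fs1 -> rec_ok fs2 -> rec_ok (rmerge fs1 fs2).
Proof.
  unfold rec_ok; revert fs2; induction fs1 as [|[l M] fs1 IH1]; intros fs2 H1 H2; [exact H2|].
  induction fs2 as [|[k N] fs2 IH2]; [rewrite rmerge_nil_r; exact H1|].
  cbn [map fst] in H1, H2.
  inversion H1 as [|? ? S1 F1]; inversion H2 as [|? ? S2 F2]; subst.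
  rewrite Forall_forall in F1, F2.
  rewrite rmerge_cons.
  destruct (Nat.ltb_spec l k); [|destruct (Nat.ltb_spec k l)];
    cbn [map fst]; constructor; try apply IH1; try apply IH2; cbn [map fst]; auto;
    apply Forall_forall; intros x Hx.
  - destruct (in_labels_rmerge _ _ _ Hx) as [Hx' | [<- | Hx']]; auto.
    specialize (F2 _ Hx'); lia.
  - destruct (in_labels_rmerge _ _ _ Hx) as [[<- | Hx'] | Hx']; auto.
    specialize (F1 _ Hx'); lia.
  - destruct (in_labels_rmerge _ _ _ Hx) as [Hx' | Hx']; auto.
    replace k with l by lia; auto.
Qed.

Ltac solve_index_cases :=
  repeat (cbn [shift subst pred]; match goal with
    | |- context [?a <=? ?b] => destruct (Nat.leb_spec a b)
    | |- context [?a <? ?b] => destruct (Nat.ltb_spec a b)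
    | |- context [?a =? ?b] => destruct (Nat.eqb_spec a b)
    end); try lia; try reflexivity; try (f_equal; lia).

Ltac solve_fields_cases :=
  rewrite ?map_map; apply map_ext_Forall; eapply Forall_impl; [|eassumption];
  intros [] ?; cbn [snd] in *; f_equal; auto.

Ltac solve_congruence_cases :=
  cbn [shift subst]; f_equal; auto; try solve_fields_cases.

Lemma shift_shift N c c' : c' <= c -> shift (S c) (shift c' N) = shift c' (shift c N).
Proof.
  revert c c'; induction N using term_ind_nested; intros c c' Hc;
    [solve_index_cases | cbn; f_equal; apply IHN; lia | solve_congruence_cases ..].
Qed.

Lemma shift_subst_below P c i N :
  c <= i -> shift c (subst i N P) = subst (S i) (shift c N) (shift c P).
Proof.
  revert c i N; induction P using term_ind_nested; intros c i N Hci;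
    [solve_index_cases | | solve_congruence_cases ..].
  cbn; f_equal; rewrite IHP by lia; f_equal; apply shift_shift; lia.
Qed.

Lemma shift_subst_above M c j N :
  j <= c -> shift c (subst j N M) = subst j (shift c N) (shift (S c) M).
Proof.
  revert c j N; induction M using term_ind_nested; intros c j N Hjc;
    [solve_index_cases | | solve_congruence_cases ..].
  cbn; f_equal; rewrite IHM by lia; f_equal; apply shift_shift; lia.
Qed.

Lemma subst_shift_cancel N j X : subst j X (shift j N) = N.
Proof.
  revert j X; induction N using term_ind_nested; intros j X;
    [solve_index_cases | cbn; f_equal; auto ..];
    transitivity (map (fun p => p) fs); solve_fields_cases || apply map_id.
Qed.

Lemma subst_subst M j k N P : j <= k ->
  subst k N (subst j P M) = subst j (subst k N P) (subst (S k) (shift j N) M).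
Proof.
  revert j k N P; induction M using term_ind_nested; intros j k N P Hjk;
    [ | | solve_congruence_cases ..].
  - solve_index_cases; subst; rewrite subst_shift_cancel; reflexivity.
  - cbn; f_equal; rewrite IHM by lia; f_equal.
    + symmetry; apply shift_subst_below; lia.
    + f_equal; apply shift_shift; lia.
Qed.

Scheme step_mut := Induction for step Sort Prop
with fstep_mut := Induction for fstep Sort Prop.

Lemma shift_wf M c : wf M -> wf (shift c M).
Proof.
  revert c; induction M as [| | | | fs IHfs | M fs IHM IHfs] using term_ind_nested;
    intros c HM; inversion HM; subst; cbn [shift];
    [destruct (c <=? n) | ..]; constructor; auto using rec_ok_map_fields.
  all: apply (Forall_map_fields wf); [|assumption]; eapply Forall_impl; [|exact IHfs]; cbn; auto.
Qed.

Lemma subst_wf M k N : wf N -> wf M -> wf (subst k N M).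
Proof.
  revert k N; induction M as [| | | | fs IHfs | M fs IHM IHfs] using term_ind_nested;
    intros k N HN HM; inversion HM; subst; cbn [subst];
    [destruct (n <? k); [|destruct (n =? k)] | ..]; try constructor;
    auto using rec_ok_map_fields, shift_wf.
  all: apply (Forall_map_fields wf); [|assumption]; eapply Forall_impl; [|exact IHfs]; cbn; auto.
Qed.

Lemma fstep_labels fs fs' : fstep fs fs' -> map fst fs = map fst fs'.
Proof. induction 1; cbn; f_equal; auto. Qed.

Lemma step_wf M N : step M N -> wf M -> wf N.
Proof.
  induction 1 as [M N | fs l M Hl | fs1 fs2 | | | | | fs fs' Hfs IHfs | | M fs fs' Hfs IHfs | |]
    using step_mut with
    (P0 := fun fs fs' _ => Forall (fun p => wf (snd p)) fs -> Forall (fun p => wf (snd p)) fs');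
    intros HM; try solve [inversion HM; subst; constructor; auto].
  - inversion HM as [| | ? ? HL HN | | |]; inversion HL; subst; apply subst_wf; auto.
  - inversion HM as [| | | ? ? HR | |]; inversion HR as [| | | | ? _ Hall |]; subst.
    rewrite Forall_forall in Hall; apply (Hall (l, M)), lookup_In, Hl.
  - inversion HM as [| | | | | ? ? HR Hok2 Hall2]; inversion HR as [| | | | ? Hok1 Hall1 |]; subst.
    constructor.
    + apply rec_ok_rmerge; auto.
    + rewrite Forall_forall in *; intros p Hp; destruct (in_rmerge _ _ _ Hp); auto.
  - inversion HM as [| | | | ? Hok Hall |]; subst.
    constructor; auto; unfold rec_ok; rewrite <- (fstep_labels _ _ Hfs); auto.
  - inversion HM as [| | | | | ? ? HM0 Hok Hall]; subst.
    constructor; auto; unfold rec_ok; rewrite <- (fstep_labels _ _ Hfs); auto.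
Qed.

Lemma red_wf M N : red M N -> wf M -> wf N.
Proof. induction 1; eauto using step_wf. Qed.

Inductive par : term -> term -> Prop :=
| par_var n : par (Var n) (Var n)
| par_lam M M' : par M M' -> par (Lam M) (Lam M')
| par_app M M' N N' : par M M' -> par N N' -> par (App M N) (App M' N')
| par_beta M M' N N' : par M M' -> par N N' -> par (App (Lam M) N) (subst 0 N' M')
| par_proj M M' l : par M M' -> par (Proj M l) (Proj M' l)
| par_proj_rec fs fs' l M : fpar fs fs' -> lookup l fs' = Some M -> par (Proj (Rec fs) l) M
| par_rec fs fs' : fpar fs fs' -> par (Rec fs) (Rec fs')
| par_ext M M' fs fs' : par M M' -> fpar fs fs' -> par (Ext M fs) (Ext M' fs')
| par_ext_rec fs1 fs1' fs2 fs2' : fpar fs1 fs1' -> fpar fs2 fs2' ->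
    par (Ext (Rec fs1) fs2) (Rec (rmerge fs1' fs2'))
with fpar : list (label * term) -> list (label * term) -> Prop :=
| fpar_nil : fpar [] []
| fpar_cons l M M' fs fs' : par M M' -> fpar fs fs' -> fpar ((l, M) :: fs) ((l, M') :: fs').

Scheme par_mut := Induction for par Sort Prop
with fpar_mut := Induction for fpar Sort Prop.

Lemma par_refl M : par M M.
Proof.
  induction M using term_ind_nested; constructor; auto;
    try match goal with H : Forall _ _ |- _ => induction H as [|[]]; constructor; auto end.
Qed.

Lemma fpar_refl fs : fpar fs fs.
Proof. induction fs as [|[l M]]; constructor; auto using par_refl. Qed.

Lemma fpar_lookup fs fs' l M : fpar fs fs' -> lookup l fs = Some M ->
  exists M', lookup l fs' = Some M' /\ par M M'.
Proof.
  induction 1 as [|k N N']; cbn; [discriminate|].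
  destruct (k =? l); [intros [= <-]|]; eauto.
Qed.

Lemma fpar_rmerge fs1 fs1' fs2 fs2' :
  fpar fs1 fs1' -> fpar fs2 fs2' -> fpar (rmerge fs1 fs2) (rmerge fs1' fs2').
Proof.
  intros H1; revert fs2 fs2'; induction H1 as [|l M M' fs1 fs1' HM H1 IH1]; intros fs2 fs2' H2;
    [exact H2|].
  induction H2 as [|k N N' fs2 fs2' HN H2 IH2]; [rewrite !rmerge_nil_r; constructor; auto|].
  rewrite !rmerge_cons.
  destruct (l <? k); [|destruct (k <? l)]; constructor; auto using fpar.
Qed.

Lemma par_shift M M' c : par M M' -> par (shift c M) (shift c M').
Proof.
  intros H; revert c.
  induction H as [| | | | | fs fs' l M _ IHfs Hl | | | | |] using par_mut with
    (P0 := fun fs fs' _ => forall c, fpar (map_fields (shift c) fs) (map_fields (shift c) fs'));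
    intros c; cbn [shift map].
  all: try solve [constructor; auto | apply par_refl].
  - rewrite (shift_subst_above _ c 0) by lia; constructor; auto.
  - eapply par_proj_rec; [apply IHfs|]; rewrite lookup_map_fields, Hl; reflexivity.
  - rewrite map_fields_rmerge; constructor; auto.
Qed.

Lemma par_subst M M' N N' k : par M M' -> par N N' -> par (subst k N M) (subst k N' M').
Proof.
  intros H HN; revert k N N' HN.
  induction H as [n | | | | | fs fs' l M _ IHfs Hl | | | | |] using par_mut with
    (P0 := fun fs fs' _ => forall k N N', par N N' ->
             fpar (map_fields (subst k N) fs) (map_fields (subst k N') fs'));
    intros k N0 N0' HN; cbn [subst map].
  all: try solve [constructor; auto using par_shift].
  - destruct (n <? k); [|destruct (n =? k)]; auto using par_refl.
  - rewrite (subst_subst _ 0 k) by lia; constructor; auto using par_shift.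
  - eapply par_proj_rec; [apply (IHfs _ _ _ HN)|]; rewrite lookup_map_fields, Hl; reflexivity.
  - rewrite map_fields_rmerge; constructor; auto.
Qed.

Fixpoint dev (t : term) : term :=
  match t with
  | Var n => Var n
  | Lam M => Lam (dev M)
  | App (Lam M) N => subst 0 (dev N) (dev M)
  | App M N => App (dev M) (dev N)
  | Proj (Rec fs) l =>
      match lookup l (map_fields dev fs) with
      | Some P => P
      | None => Proj (Rec (map_fields dev fs)) l
      end
  | Proj M l => Proj (dev M) l
  | Rec fs => Rec (map_fields dev fs)
  | Ext (Rec fs1) fs2 => Rec (rmerge (map_fields dev fs1) (map_fields dev fs2))
  | Ext M fs => Ext (dev M) (map_fields dev fs)
  end.

Lemma par_dev M M' : par M M' -> par M' (dev M).
Proof.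
  induction 1 as [| | M M' N N' HM IHM | | M M' l HM IHM | fs fs' l M _ IHfs Hl | |
                  M M' fs fs' HM IHM | | |]
    using par_mut with (P0 := fun fs fs' _ => fpar fs' (map_fields dev fs)).
  - constructor.
  - constructor; auto.
  - destruct M; try (constructor; auto; fail).
    inversion HM; subst; inversion IHM; subst; constructor; auto.
  - apply par_subst; auto.
  - destruct M as [| | | | fs |]; try (constructor; auto; fail).
    inversion HM; subst; inversion IHM; subst; cbn.
    destruct (lookup l (map_fields dev fs)) eqn:Hl;
      [eapply par_proj_rec | constructor; constructor]; eauto.
  - cbn; destruct (fpar_lookup _ _ _ _ IHfs Hl) as [P [-> HP]]; auto.
  - constructor; auto.
  - destruct M; try (constructor; auto; fail).
    inversion HM; subst; inversion IHM; subst; constructor; auto.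
  - constructor; apply fpar_rmerge; auto.
  - constructor.
  - constructor; auto.
Qed.

Lemma step_par M N : step M N -> par M N.
Proof.
  induction 1 using step_mut with (P0 := fun fs fs' _ => fpar fs fs');
    try solve [constructor; auto using par_refl, fpar_refl].
  - eapply par_proj_rec; eauto using fpar_refl.
  - destruct p; constructor; auto using par_refl.
Qed.

Lemma red_trans M N P : red M N -> red N P -> red M P.
Proof. induction 1; eauto using red. Qed.

Lemma red_congr (C : term -> term) M M' :
  (forall N N', step N N' -> step (C N) (C N')) -> red M M' -> red (C M) (C M').
Proof. intros HC; induction 1; eauto using red. Qed.

(* Quantifying over contexts lets one hypothesis serve the field lists under
   [Rec], [Ext M] and [Proj (Rec _) l] alike. *)
Definition fields_red (fs fs' : list (label * term)) : Prop :=
  forall C : list (label * term) -> term,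
  (forall gs gs', fstep gs gs' -> step (C gs) (C gs')) -> red (C fs) (C fs').

Lemma red_app M M' N N' : red M M' -> red N N' -> red (App M N) (App M' N').
Proof.
  intros HM HN; apply red_trans with (App M' N).
  - apply (red_congr (fun X => App X N)); auto using step.
  - apply (red_congr (App M')); auto using step.
Qed.

Lemma red_ext M M' fs fs' : red M M' -> fields_red fs fs' -> red (Ext M fs) (Ext M' fs').
Proof.
  intros HM Hfs; apply red_trans with (Ext M' fs).
  - apply (red_congr (fun X => Ext X fs)); auto using step.
  - apply (Hfs (Ext M')); auto using step.
Qed.

Lemma par_red M N : par M N -> red M N.
Proof.
  induction 1 as [| | | | | fs fs' l M Hfs IHfs | fs fs' Hfs IHfs | | fs1 fs1' fs2 fs2' _ IH1 _ IH2
                  | | l M M' fs fs' _ IHM _ IHfs]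
    using par_mut with (P0 := fun fs fs' _ => fields_red fs fs').
  - constructor.
  - apply (red_congr Lam); auto using step.
  - apply red_app; auto.
  - apply red_trans with (App (Lam M') N'); [|eauto using red, step].
    apply red_app; [apply (red_congr Lam)|]; auto using step.
  - apply (red_congr (fun X => Proj X l)); auto using step.
  - apply red_trans with (Proj (Rec fs') l); [|eauto using red, step].
    apply (IHfs (fun gs => Proj (Rec gs) l)); auto using step.
  - apply (IHfs Rec); auto using step.
  - apply red_ext; auto.
  - apply red_trans with (Ext (Rec fs1') fs2'); [|eauto using red, step].
    apply red_ext; [apply (IH1 Rec)|]; auto using step.
  - intros C _; constructor.
  - intros C HC; apply red_trans with (C ((l, M') :: fs)).
    + apply (red_congr (fun X => C ((l, X) :: fs))); auto using fstep.
    + apply (IHfs (fun gs => C ((l, M') :: gs))); auto using fstep.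
Qed.

Lemma red_iff_rt1n_par M N : red M N <-> clos_refl_trans_1n term par M N.
Proof.
  split; induction 1.
  - constructor.
  - econstructor; eauto using step_par.
  - constructor.
  - eapply red_trans; eauto using par_red.
Qed.

Theorem theorem3p2 : forall M M1 M2 : term,
  wf M -> red M M1 -> red M M2 ->
  exists M3 : term, wf M3 /\ red M1 M3 /\ red M2 M3.
Proof.
  intros M M1 M2 HM H1 H2.
  destruct (confluent_of_triangle _ par dev par_dev M M1 M2) as [M3 [H13 H23]];
    try (apply red_iff_rt1n_par; assumption).
  apply red_iff_rt1n_par in H13, H23.
  exists M3; split; [|split; assumption].
  apply (red_wf M1); [exact H13|]; apply (red_wf M); assumption.
Qed.
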